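(* Assume GCH. Let $\lambda<\kappa$ be infinite cardinals with $\mathrm{cf}(\kappa)=\omega$. Then every $(\lambda,\kappa)$-graph contains an $(\aleph_0,\kappa)$-subgraph.
   Context: For infinite cardinals $\lambda<\kappa$, a $(\lambda,\kappa)$-graph is a bipartite graph with bipartition $(A,B)$, $|A|=\lambda$, $|B|=\kappa$, in which every vertex $b\in B$ has infinitely many neighbours in $A$. An $(\aleph_0,\kappa)$-subgraph of such a graph is a subgraph with bipartition $(C,D)$, $C\subseteq A$, $D\subseteq B$, which is itself an $(\aleph_0,\kappa)$-graph. *)

From HB Require Import structures.
From mathcomp Require Import all_boot all_order.
From mathcomp Require Import boolp classical_sets functions cardinality.

Set Implicit Arguments.
Unset Strict Implicit.
Unset Printing Implicit Defensive.

Local Open Scope classical_set_scope.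
Local Open Scope card_scope.

Definition card_lt T U (A : set T) (B : set U) := A #<= B /\ ~ (B #<= A).

(* GCH at the cardinal |X| (X infinite): every cardinal mu with
   |X| <= mu <= 2^|X| (every such mu is the cardinality of a family
   S of subsets of X) equals |X| or 2^|X|. *)
Definition GCH_at (X : Type) : Prop :=
  infinite_set [set: X] ->
  forall S : set (set X), [set: X] #<= S ->
    S #= [set: X] \/ S #= [set: set X].

Definition strict_well_order T (R : T -> T -> Prop) : Prop :=
  [/\ forall x, ~ R x x,
      forall x y z, R x y -> R y z -> R x z,
      forall x y, [\/ R x y, x = y | R y x] &
      well_founded R].

(* cf(|B|) = omega: B is well-ordered in order type |B| (an initial ordinal:
   every proper initial segment has cardinality < |B|), and there is an
   omega-sequence cofinal in this order (every element lies strictly below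
   some term, so there is no finite cofinal subset). *)
Definition cof_omega (B : Type) : Prop :=
  exists R : B -> B -> Prop,
    [/\ strict_well_order R,
        forall b, card_lt [set x | R x b] [set: B] &
        exists s : nat -> B, forall x, exists n, R x (s n)].

(* (lambda,kappa)-graph on bipartition (A,B): every b in B has infinitely
   many neighbours in A (cardinality conditions stated in the theorem). *)
Definition bip_inf_nbrs (A B : Type) (E : A -> B -> Prop) : Prop :=
  forall b : B, infinite_set [set a | E a b].

Definition has_aleph0_kappa_subgraph (A B : Type) (E : A -> B -> Prop) : Prop :=
  exists (C : set A) (D : set B),
    [/\ C #= [set: nat], D #= [set: B] &
        forall d, D d -> infinite_set (C `&` [set a | E a d])].

(* Write kappa = |B| as the union of the initial segments I_n below an
   omega-sequence cofinal in B; each I_n has size < kappa.  Under GCH,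
   kappa <= 2^lambda is impossible: then kappa = 2^lambda, so each I_n, being
   smaller than 2^lambda, has size <= lambda by GCH, and
   kappa <= aleph_0 * lambda = lambda.  So 2^lambda < kappa.  Choose for every
   b in B a countably infinite set N b of neighbours.  N takes at most
   2^lambda values, so for each n some fibre of N has at least |I_n| elements;
   the union D of one such fibre per n has size kappa, and the union C of the
   corresponding (countably many, countable) values of N is countable.  Every
   d in D has the infinite set N d of neighbours inside C. *)

From mathcomp Require Import all_boot all_order.
From mathcomp Require Import boolp classical_sets functions cardinality.
Set Implicit Arguments.
Unset Strict Implicit.
Unset Printing Implicit Defensive.
Local Open Scope classical_set_scope.
Local Open Scope card_scope.

Lemma card_le_of_inj T U (A : set T) (B : set U) (f : T -> U) :
  set_fun A B f -> set_inj A f -> A #<= B.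
Proof.
by move=> fAB finj; have [g] := injfunPex.2 (ex_intro2 _ _ f fAB finj); apply: inj_card_le.
Qed.

Lemma card_le_inj T U (A : set T) (B : set U) (u0 : U) :
  A #<= B -> exists2 f : T -> U, set_fun A B f & set_inj A f.
Proof.
elim/Ppointed: U B u0 => {}U B u0; first by case: (no u0).
case/pcard_leP => f; exists f => [x Ax|]; [exact: funS | exact: inj].
Qed.

Lemma card_le_rel T U (A : set T) (B : set U) (R : T -> U -> Prop) :
  (forall x, A x -> exists2 y, B y & R x y) ->
  (forall x x' y, A x -> A x' -> R x y -> R x' y -> x = x') -> A #<= B.
Proof.
move=> Rtot Rinj; have [->|/set0P[a Aa]] := eqVneq A set0; first exact: card_ge0.
have [y0 _ _] := Rtot a Aa.
have /choice[f fR] : forall x, exists y, A x -> B y /\ R x y.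
  move=> x; have [/Rtot[y By Rxy]|nAx] := pselect (A x); first by exists y.
  by exists y0.
apply: (card_le_of_inj (f := f)) => [x /fR[]//|x x' /set_mem Ax /set_mem Ax' fxx'].
by apply: (Rinj _ _ (f x)) => //; [case: (fR x)|rewrite fxx'; case: (fR x')].
Qed.

Lemma total_on_subset_ub T (F : set (set T)) G1 G2 : total_on F subset ->
  F G1 -> F G2 -> exists2 G, F G & G1 `<=` G /\ G2 `<=` G.
Proof.
move=> Ftot F1 F2.
by have [S12|S21] := Ftot _ _ F1 F2; [exists G2|exists G1]; try split.
Qed.

Lemma card_le_total T U (A : set T) (B : set U) : A #<= B \/ B #<= A.
Proof.
pose P (G : set (T * U)) := [/\ G `<=` A `*` B,
  forall x y y', G (x, y) -> G (x, y') -> y = y' &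
  forall x x' y, G (x, y) -> G (x', y) -> x = x'].
have [G [[GAB Gfun Ginj] Gmax]] : exists G, P G /\ forall G', G `<` G' -> ~ P G'.
  apply: Zorn_bigcup => F FP Ftot; split.
  - by move=> p [G /FP[+ _ _]]; apply.
  - move=> x y y' [G1 F1 G1y] [G2 F2 G2y'].
    have [G FG [S1 S2]] := total_on_subset_ub Ftot F1 F2.
    by have [_ + _] := FP G FG; apply; [apply: S1 G1y|apply: S2 G2y'].
  - move=> x x' y [G1 F1 G1x] [G2 F2 G2x'].
    have [G FG [S1 S2]] := total_on_subset_ub Ftot F1 F2.
    by have [_ _] := FP G FG; apply; [apply: S1 G1x|apply: S2 G2x'].
have [Gtot|] := pselect (forall x, A x -> exists y, G (x, y)).
  left; apply: (card_le_rel (R := fun x y => G (x, y))) => [x /Gtot[y Gxy]|].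
    by exists y => //; have [] := GAB _ Gxy.
  by move=> x x' y _ _; apply: Ginj.
have [Gsurj|] := pselect (forall y, B y -> exists x, G (x, y)).
  right; apply: (card_le_rel (R := fun y x => G (x, y))) => [y /Gsurj[x Gxy]|].
    by exists x => //; have [] := GAB _ Gxy.
  by move=> y y' x _ _; apply: Gfun.
move=> /existsNP[b /not_implyP[Bb nb]] /existsNP[a /not_implyP[Aa na]].
have Gab : ~ G (a, b) by move=> Gab; apply: na; exists b.
exfalso; apply: (Gmax (G `|` [set (a, b)])).
  by split=> [p Gp|/(_ (a, b)) Gab']; [left|apply/Gab/Gab'; right].
split=> [p [/GAB//|->//]| x y y' | x x' y].
- move=> [Gxy|/pair_equal_spec[-> ->]] [Gxy'|/pair_equal_spec[E ->]] //.
  + exact: Gfun Gxy Gxy'.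
  + by case: na; exists y; rewrite -E.
  + by case: na; exists y'.
- move=> [Gxy|/pair_equal_spec[-> ->]] [Gx'y|/pair_equal_spec[-> E]] //.
  + exact: Ginj Gxy Gx'y.
  + by case: nb; exists x; rewrite -E.
  + by case: nb; exists x'.
Qed.

Lemma card_le_setX T T' U U' (A : set T) (A' : set T') (B : set U) (B' : set U') :
  A #<= A' -> B #<= B' -> A `*` B #<= A' `*` B'.
Proof.
move=> AA' BB'.
have [A'0|/set0P[a' _]] := eqVneq A' set0.
  by move: AA'; rewrite A'0 => /card_le0P->; rewrite set0X; apply: card_ge0.
have [B'0|/set0P[b' _]] := eqVneq B' set0.
  by move: BB'; rewrite B'0 => /card_le0P->; rewrite setX0; apply: card_ge0.
have [f fA finj] := card_le_inj a' AA'; have [g gB ginj] := card_le_inj b' BB'.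
apply: (card_le_of_inj (f := fun p => (f p.1, g p.2))) => [[x y] [/= /fA ? /gB ?]//|].
move=> [x y] [x' y']; rewrite !in_setX => /andP[/= Ax By] /andP[/= Ax' By'] [].
by move=> /finj-> // /ginj->.
Qed.

Lemma infinite_sub_card_nat T (S : set T) :
  infinite_set S -> exists2 C, C `<=` S & C #= [set: nat].
Proof.
move=> Sinf; have [s0 _] := infinite_setN0 Sinf.
have [e eS einj] := card_le_inj s0 ((infiniteP _).1 Sinf).
exists (e @` setT); first by move=> _ [n _ <-]; apply: eS.
exact: inj_card_eq.
Qed.

Section Hessenberg.
Variable T : Type.

Definition sqdom (G : set ((T * T) * T)) : set T := [set x | exists z, G ((x, x), z)].

Definition sqgraph (Y : set T) (f : T * T -> T) : set ((T * T) * T) :=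
  [set q | (Y `*` Y) q.1 /\ q.2 = f q.1].

(* [G] is the graph of an injection [sqdom G `*` sqdom G -> sqdom G]; being
   stated relationally, the class is closed under unions of chains. *)
Record square_graph (G : set ((T * T) * T)) : Prop := SquareGraph {
  square_graph_dom : forall x y z, G ((x, y), z) -> [/\ sqdom G x, sqdom G y & sqdom G z];
  square_graph_total : forall x y, sqdom G x -> sqdom G y -> exists z, G ((x, y), z);
  square_graph_fun : forall p z z', G (p, z) -> G (p, z') -> z = z';
  square_graph_inj : forall p p' z, G (p, z) -> G (p', z) -> p = p' }.

Lemma sqdom_sqgraph Y f : sqdom (sqgraph Y f) = Y.
Proof. by apply/seteqP; split=> [x [z [[]]]|x Yx] //; exists (f (x, x)). Qed.

Lemma sqgraph_square_graph Y f :
  set_fun (Y `*` Y) Y f -> set_inj (Y `*` Y) f -> square_graph (sqgraph Y f).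
Proof.
move=> fY finj; split; rewrite ?sqdom_sqgraph.
- by move=> x y z [[/= Yx Yy] ->]; split=> //; apply: fY.
- by move=> x y Yx Yy; exists (f (x, y)).
- by move=> p z z' [_ /= ->] [_ /= ->].
- by move=> p p' z [Yp /= ->] [Yp' /= fpp']; apply: finj fpp'; rewrite inE.
Qed.

Lemma square_graph_sqgraph (t0 : T) G : square_graph G ->
  exists f, [/\ G = sqgraph (sqdom G) f,
    set_fun (sqdom G `*` sqdom G) (sqdom G) f & set_inj (sqdom G `*` sqdom G) f].
Proof.
move=> [Gdom Gtot Gfun Ginj].
have /choice[f fG] : forall q, exists z, (sqdom G `*` sqdom G) q -> G (q, z).
  move=> [x y]; have [[/= Dx Dy]|nD] := pselect ((sqdom G `*` sqdom G) (x, y)).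
    by have [z Gz] := Gtot x y Dx Dy; exists z.
  by exists t0.
have GE : G = sqgraph (sqdom G) f.
  apply/seteqP; split=> [[[x y] z] Gz|[q z] [Dq /= ->]]; last exact: fG.
  have [Dx Dy _] := Gdom _ _ _ Gz.
  by split=> //; apply: (Gfun (x, y)) => //; apply: fG.
exists f; split=> // [[x y] /fG /Gdom[]//|p q /set_mem Dp /set_mem Dq fpq].
by apply: (Ginj _ _ (f p)); [apply: fG|rewrite fpq; apply: fG].
Qed.

Lemma sqdomS G G' : G `<=` G' -> sqdom G `<=` sqdom G'.
Proof. by move=> GG' x [z Gz]; exists z; apply: GG'. Qed.

Lemma sqdom_bigcup (F : set (set ((T * T) * T))) :
  sqdom (\bigcup_(G in F) G) = \bigcup_(G in F) sqdom G.
Proof.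
apply/seteqP; split=> [x [z [G FG Gz]]|x [G FG [z Gz]]]; last by exists z, G.
by exists G => //; exists z.
Qed.

Lemma square_graph_bigcup (F : set (set ((T * T) * T))) :
  total_on F subset -> F `<=` square_graph -> square_graph (\bigcup_(G in F) G).
Proof.
move=> Ftot Fsq; set U := \bigcup_(G in F) G.
have GU G : F G -> G `<=` U by move=> FG q Gq; exists G.
have ub G1 G2 : F G1 -> F G2 ->
    exists2 G, square_graph G & [/\ G `<=` U, G1 `<=` G & G2 `<=` G].
  move=> F1 F2; have [G FG [S1 S2]] := total_on_subset_ub Ftot F1 F2.
  by exists G; [apply: Fsq|split=> //; apply: GU].
split.
- move=> x y z [G FG /(square_graph_dom (Fsq _ FG))[Dx Dy Dz]].
  by split; apply: (sqdomS (GU _ FG)).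
- rewrite /U sqdom_bigcup => x y [G1 F1 D1x] [G2 F2 D2y].
  have [G sqG [GU' S1 S2]] := ub _ _ F1 F2.
  have [z Gz] := square_graph_total sqG (sqdomS S1 D1x) (sqdomS S2 D2y).
  by exists z; apply: GU'.
- move=> p z z' [G1 F1 G1z] [G2 F2 G2z'].
  have [G sqG [_ S1 S2]] := ub _ _ F1 F2.
  exact: (square_graph_fun sqG (S1 _ G1z) (S2 _ G2z')).
- move=> p p' z [G1 F1 G1p] [G2 F2 G2p'].
  have [G sqG [_ S1 S2]] := ub _ _ F1 F2.
  exact: (square_graph_inj sqG (S1 _ G1p) (S2 _ G2p')).
Qed.

Lemma card_setU_absorb (Y Z : set T) :
  infinite_set Y -> Y `*` Y #<= Y -> Z #<= Y -> Y `|` Z #<= Y.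
Proof.
move=> Yinf YY ZY; have [y0 _] := infinite_setN0 Yinf.
have [f fY finj] := card_le_inj y0 ZY.
have boolY : [set: bool] #<= Y.
  exact: (card_le_trans (countableP [set: bool]) ((infiniteP _).1 Yinf)).
apply: (card_le_trans _ (card_le_trans (card_le_setX (card_lexx Y) boolY) YY)).
apply: (card_le_of_inj (f := fun x => if x \in Y then (x, true) else (f x, false))).
  move=> x YZx; case: ifPn => [/set_mem Yx|nYx]; split=> //; apply: fY.
  by case: YZx => // /mem_set Yx; rewrite Yx in nYx.
have Zx x : (Y `|` Z) x -> x \notin Y -> x \in Z.
  by move=> [/mem_set ->//|/mem_set].
move=> x x' /set_mem YZx /set_mem YZx'.
case: ifPn => Yx; case: ifPn => Yx' [] // fxx'.
by apply: finj fxx'; apply: Zx.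
Qed.

Lemma square_graph_extend (X : set T) G :
  square_graph G -> infinite_set (sqdom G) -> sqdom G `<=` X ->
  sqdom G #<= X `\` sqdom G ->
  exists2 G', G `<` G' & square_graph G' /\ sqdom G' `<=` X.
Proof.
move=> sqG Yinf YX YXY; set Y := sqdom G in Yinf YX YXY *.
have [y0 Yy0] := infinite_setN0 Yinf.
have [g [GE gY ginj]] := square_graph_sqgraph y0 sqG.
have YY : Y `*` Y #<= Y := card_le_of_inj gY ginj.
have [h hXY hinj] := card_le_inj y0 YXY.
set Z := h @` Y.
have ZXY : Z `<=` X `\` Y by move=> _ [y Yy <-]; apply: hXY.
have [_ YZ] := (card_eqPle _ _).1 (inj_card_eq hinj).
set W := Y `|` Z.
have WY : W #<= Y := card_setU_absorb Yinf YY (card_image_le h Y).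
have [k kZ kinj] :=
  card_le_inj y0 (card_le_trans (card_le_setX WY WY) (card_le_trans YY YZ)).
(* [W] has the size of [Y], so [W `*` W] injects into the fresh part [Z];
   use that injection off [Y `*` Y]. *)
pose g' q := if q \in Y `*` Y then g q else k q.
have g'W : set_fun (W `*` W) W g'.
  by move=> q Wq; rewrite /g'; case: ifPn => [/set_mem/gY|_]; [left|right; apply: kZ].
have g'inj : set_inj (W `*` W) g'.
  move=> p q Wp Wq; rewrite /g'.
  case: ifPn => Yp; case: ifPn => Yq; [exact: ginj| | |exact: kinj].
    move=> gk; have [_ []] := ZXY _ (kZ _ (set_mem Wq)).
    by rewrite -gk; apply: gY (set_mem Yp).
  move=> kg; have [_ []] := ZXY _ (kZ _ (set_mem Wp)).
  by rewrite kg; apply: gY (set_mem Yq).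
exists (sqgraph W g'); last first.
  split; first exact: sqgraph_square_graph.
  by rewrite sqdom_sqgraph => x [/YX|/ZXY[]].
split.
  move=> [[x y] z]; rewrite {1}GE => -[/= [Yx Yy] ->].
  by split=> /=; [split; left|rewrite /g' ifT //; apply/mem_set].
have Zhy0 : Z (h y0) by exists y0.
move=> /(_ ((h y0, h y0), g' (h y0, h y0))) G'G.
have /(square_graph_dom sqG)[Yhy0 _ _] : G ((h y0, h y0), g' (h y0, h y0)).
  by apply: G'G; split=> //; split; right.
by have [] := ZXY _ Zhy0.
Qed.

Lemma exists_max_square_graph (X : set T) : infinite_set X ->
  exists G, [/\ square_graph G, sqdom G `<=` X, infinite_set (sqdom G) &
    forall G', G `<` G' -> square_graph G' -> ~ sqdom G' `<=` X].
Proof.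
move=> Xinf.
(* [set0] must be allowed as the union of the empty chain; a countable seed
   graph shows that the maximal element is not [set0]. *)
pose P G := [/\ square_graph G, sqdom G `<=` X & G = set0 \/ infinite_set (sqdom G)].
have [G [[sqG GX Ginf] Gmax]] : exists G, P G /\ forall G', G `<` G' -> ~ P G'.
  apply: Zorn_bigcup => F FP Ftot; split.
  - by apply: square_graph_bigcup => // G /FP[].
  - by rewrite sqdom_bigcup => x [G /FP[_ GX _] /GX].
  - have [->|/set0P[q [G FG Gq]]] := eqVneq (\bigcup_(G in F) G) set0; first by left.
    right; have [_ _ [G0|DGinf]] := FP G FG; first by rewrite G0 in Gq.
    by apply: sub_infinite_set DGinf; apply: sqdomS => r Gr; exists G.
have [C CX Cnat] := infinite_sub_card_nat Xinf.
have [CN NC] := (card_eqPle _ _).1 Cnat.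
have [NN _] := (card_eqPle _ _).1 card_nat2.
have [c0 Cc0] := infinite_setN0 ((infiniteP _).2 NC).
have CC : C `*` C #<= C.
  by apply: card_le_trans (card_le_setX CN CN) _; rewrite setXTT; apply: card_le_trans NN NC.
have [f fC finj] := card_le_inj c0 CC.
have Yinf : infinite_set (sqdom G).
  case: Ginf => // G0; exfalso; apply: (Gmax (sqgraph C f)).
    by rewrite G0; split=> // /(_ ((c0, c0), f (c0, c0))); apply.
  split; rewrite ?sqdom_sqgraph //; first exact: sqgraph_square_graph.
  by right; apply: (infiniteP _).2.
exists G; split=> // G' GG' sqG' G'X; apply: (Gmax G' GG'); split=> //.
by right; apply: sub_infinite_set Yinf; apply: sqdomS; case: GG'.
Qed.

Theorem card_setXX_le (X : set T) : infinite_set X -> X `*` X #<= X.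
Proof.
move=> Xinf; have [G [sqG GX Yinf Gmax]] := exists_max_square_graph Xinf.
have [x0 _] := infinite_setN0 Yinf.
have [g [_ gY ginj]] := square_graph_sqgraph x0 sqG.
have YY := card_le_of_inj gY ginj.
have [YXY|XYY] := card_le_total (sqdom G) (X `\` sqdom G).
  by have [G' GG' [sqG' G'X]] := square_graph_extend sqG Yinf GX YXY; case: (Gmax G').
have XY : X #<= sqdom G.
  apply: card_le_trans (card_setU_absorb Yinf YY XYY); apply: subset_card_le.
  by move=> x Xx; have [Yx|nYx] := pselect (sqdom G x); [left|right].
apply: card_le_trans (card_le_setX XY XY) _.
exact: card_le_trans YY (subset_card_le GX).
Qed.

End Hessenberg.

Lemma card_le_fibers T W V (A : set T) (f : T -> W) (M : set V) :
  (forall w, A `&` f @^-1` [set w] #<= M) -> A #<= [set: W] `*` M.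
Proof.
move=> fibM; have [->|/set0P[a Aa]] := eqVneq A set0; first exact: card_ge0.
have [M0|/set0P[m0 _]] := eqVneq M set0.
  by have := fibM (f a); rewrite M0 => /card_le0P/seteqP[/(_ a)/=]; case.
have /choice[F FM] : forall w, exists F : T -> V,
    set_fun (A `&` f @^-1` [set w]) M F /\ set_inj (A `&` f @^-1` [set w]) F.
  by move=> w; have [F ? ?] := card_le_inj m0 (fibM w); exists F.
apply: (card_le_of_inj (f := fun x => (f x, F (f x) x))).
  by move=> x Ax; split=> //=; apply: (FM (f x)).1.
move=> x y /set_mem Ax /set_mem Ay [fxy]; rewrite fxy => Fxy.
by apply: (FM (f y)).2 Fxy; rewrite inE.
Qed.

Lemma card_le_bigcup_nat T U (X : set T) (K : nat -> set T) (D : set U) :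
  X `<=` \bigcup_n K n -> (forall n, K n #<= D) -> X #<= [set: nat] `*` D.
Proof.
move=> XK KD; have /choice[n nK] : forall x, exists n, X x -> K n x.
  by move=> x; have [/XK[n _ Knx]|nXx] := pselect (X x); [exists n|exists 0%N].
apply: (card_le_fibers (f := n)) => m; apply: (card_le_trans _ (KD m)).
by apply: subset_card_le => x [Xx /= <-]; apply: nK.
Qed.

Lemma card_natX_le T (D : set T) : infinite_set D -> [set: nat] `*` D #<= D.
Proof.
move=> Dinf; apply: (card_le_trans _ (card_setXX_le Dinf)).
exact: card_le_setX ((infiniteP _).1 Dinf) (card_lexx D).
Qed.

Lemma card_setX_le_max T U (Y : set T) (Z : set U) :
  infinite_set Y -> Y `*` Z #<= Y \/ Y `*` Z #<= Z.
Proof.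
move=> Yinf; have [ZY|YZ] := card_le_total Z Y.
  by left; apply: card_le_trans (card_le_setX (card_lexx Y) ZY) (card_setXX_le Yinf).
have Zinf : infinite_set Z by move=> /(card_le_finite YZ).
by right; apply: card_le_trans (card_le_setX YZ (card_lexx Z)) (card_setXX_le Zinf).
Qed.

Lemma exists_large_fiber T V (A I : set T) (f : T -> V) :
  infinite_set [set: V] -> ~ (A #<= I) -> ~ (A #<= [set: V]) ->
  exists2 x, A x & I #<= A `&` f @^-1` [set f x].
Proof.
move=> Vinf AI AV; apply: contrapT => nfib.
have fibI w : A `&` f @^-1` [set w] #<= I.
  have [[x [Ax <-]]|] := pselect (exists x, (A `&` f @^-1` [set w]) x).
    by have [//|Ifib] := card_le_total (A `&` f @^-1` [set f x]) I; case: nfib; exists x.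
  move=> nx; suff -> : A `&` f @^-1` [set w] = set0 by apply: card_ge0.
  by apply/seteqP; split=> // x Ax; apply: nx; exists x.
have AVI := card_le_fibers fibI.
by case: (card_setX_le_max I Vinf) => VI; [apply: AV|apply: AI]; apply: card_le_trans AVI VI.
Qed.

Lemma GCH_card_le X U (C : set U) : GCH_at X -> infinite_set [set: X] ->
  C #<= [set: set X] -> ~ ([set: set X] #<= C) -> C #<= [set: X].
Proof.
move=> gch Xinf CP nPC; have [//|XC] := card_le_total C [set: X].
have [phi _ phiinj] := card_le_inj set0 CP.
have [_ CS] := (card_eqPle _ _).1 (inj_card_eq phiinj).
case: (gch Xinf (phi @` C) (card_le_trans XC CS)) => /card_eqPle[SX PS].
  exact: card_le_trans CS SX.
by case: nPC; apply: card_le_trans PS (card_image_le phi C).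
Qed.

Lemma GCH_not_card_le_powerset A B (I : nat -> set B) :
  GCH_at A -> infinite_set [set: A] -> card_lt [set: A] [set: B] ->
  [set: B] `<=` \bigcup_n I n -> (forall n, ~ ([set: B] #<= I n)) ->
  ~ ([set: B] #<= [set: set A]).
Proof.
move=> gch Ainf [AB nBA] BI nBI BP.
have PB : [set: set A] #<= [set: B].
  by apply: contrapT => nPB; apply: nBA (GCH_card_le gch Ainf BP nPB).
apply: nBA; apply: (card_le_trans _ (card_natX_le Ainf)).
apply: (card_le_bigcup_nat BI) => n; apply: GCH_card_le gch Ainf _ _.
  exact: card_le_trans (card_leT (I n)) BP.
by move=> PI; apply: (nBI n); apply: card_le_trans BP PI.
Qed.

Lemma aleph0_kappa_subgraph_of_fibers A B (E : A -> B -> Prop) (N : B -> set A)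
    (b : nat -> B) :
  (forall d, N d `<=` [set a | E a d] /\ N d #= [set: nat]) ->
  ~ countable [set: B] ->
  [set: B] #<= [set: nat] `*` \bigcup_n [set d | N d = N (b n)] ->
  has_aleph0_kappa_subgraph E.
Proof.
move=> NEnat Bunc BND; set D := \bigcup_n _ in BND.
have Ninf d : infinite_set (N d).
  by apply/infiniteP; have [_ /card_eqPle[]] := NEnat d.
exists (\bigcup_n N (b n)), D; split.
- apply: eq_card_nat.
    by apply: bigcup_countable => // n _; have [_ /card_eqPle[]] := NEnat (b n).
  by apply: sub_infinite_set (Ninf (b 0%N)) => a Na; exists 0%N.
- apply/card_eqPle; split; first exact: card_leT.
  have [Dfin|Dinf] := pselect (finite_set D).
    case: Bunc; apply: card_le_trans BND _.
    by apply: countableX => //; apply: finite_set_countable.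
  exact: card_le_trans BND (card_natX_le Dinf).
- move=> d [n _ Ndn]; apply: sub_infinite_set (Ninf d) => a Nda.
  by split; [exists n => //; rewrite -Ndn|apply: (NEnat d).1].
Qed.

Theorem corollary4p7
  (gch : forall X : Type, GCH_at X)
  (A B : Type)
  (hA : infinite_set [set: A])
  (hAB : card_lt [set: A] [set: B])
  (hcf : cof_omega B)
  (E : A -> B -> Prop)
  (hE : bip_inf_nbrs E) :
  has_aleph0_kappa_subgraph E.
Proof.
have [R [_ Rlt [s Rs]]] := hcf; pose I n := [set x | R x (s n)].
have nBI n : ~ ([set: B] #<= I n) by have [] := Rlt (s n).
have BI : [set: B] `<=` \bigcup_n I n by move=> x _; have [n] := Rs x; exists n.
have nBP := GCH_not_card_le_powerset (gch A) hA hAB BI nBI.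
have Pinf : infinite_set [set: set A].
  apply: contra_not hA; apply: card_le_finite.
  apply: (card_le_of_inj (f := set1)) => // x y _ _ xy.
  by have : [set y] x by rewrite -xy.
have /choice[N NE] : forall d, exists N, N `<=` [set a | E a d] /\ N #= [set: nat].
  by move=> d; have [N ? ?] := infinite_sub_card_nat (hE d); exists N.
have /choice[b Ifib] : forall n, exists b, I n #<= [set: B] `&` N @^-1` [set N b].
  by move=> n; have [b _ ?] := exists_large_fiber N Pinf (nBI n) nBP; exists b.
apply: (aleph0_kappa_subgraph_of_fibers (b := b) NE).
- by case: hAB => _ nBA Bcnt; apply: nBA; apply: card_le_trans Bcnt ((infiniteP _).1 hA).
- apply: card_le_bigcup_nat BI _ => n; apply: card_le_trans (Ifib n) _.
  by apply: subset_card_le => d [_ Nd]; exists n.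
Qed.
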